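(* Let $X$ be a finite set and let $c$ be a choice correspondence on $X$. Then $c$ admits a minimal compromise representation if and only if $c$ satisfies the following five conditions: Condition 1: for all $x,y\in X$ and menus $A\subset B$, if $x,y\in A$, $x\in c(A)$ and $y\in c(B)$, then $x\in c(B)$. Condition 2: for all $x,y\in X$ and menus $A\subset B$, if $x,y\in A$, $x\in r^{c}(A)$ and $y\in r^{c}(B)$, then $x\in r^{c}(B)$. Condition 3: for every menu $A$ with at least two elements there exists $x\in A$ with $x\notin c(A)$. Condition 4: for every menu $A$ and all $x,y\in X$, if $x\in A\setminus c(A)$ and $x\in c(A\cup\{y\})$, then $y\notin c(A\cup\{y\})$. Condition 5: for every menu $A$ and every menu $B\subseteq r^{c}(A)$ with at least two elements, there exists $x\in B$ with $x\notin c(B)$ such that $B=c(B)\cup\{x\}$.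
   Context: A menu is a nonempty subset of $X$. A choice correspondence is a map $c$ assigning to each menu $A$ a nonempty subset $c(A)\subseteq A$. A weak order is a complete and transitive binary relation on $X$; a linear order is an antisymmetric weak order. For a weak order $R$ and menu $A$, $\max(A,R)=\{x\in A: xRy \text{ for all } y\in A\}$. For a linear order $L$, $\min(A,L)$ denotes the unique $x\in A$ with $yLx$ for all $y\in A$. A choice correspondence $c$ admits a minimal compromise representation if there exist a weak order $R$ and a linear order $L$ on $X$ such that for every menu $A$: $c(A)=\max(A,R)$ if $\max(A,R)$ is a singleton, and $c(A)=\max(A,R)\setminus\{\min(\max(A,R),L)\}$ otherwise. For a choice correspondence $c$ and menu $A$, $r^{c}(A)=\{x\in A: c(A\setminus\{x\})\neq c(A)\}$, the set of alternatives whose removal changes the choice (with the convention that for a singleton $A=\{x\}$ the removal of $x$ counts as changing the choice, so $r^c(\{x\})=\{x\}$; in particular $c(A)\subseteq r^c(A)$ always). *)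

From mathcomp Require Import all_boot.
Set Implicit Arguments. Unset Strict Implicit. Unset Printing Implicit Defensive.

Section Defs.
Variable X : finType.

Definition menu (A : {set X}) : Prop := A != set0.

Definition choice_corr (c : {set X} -> {set X}) : Prop :=
  forall A, menu A -> c A != set0 /\ c A \subset A.

Definition complete_rel (R : rel X) : Prop := forall x y, R x y \/ R y x.
Definition transitive_rel (R : rel X) : Prop :=
  forall x y z, R x y -> R y z -> R x z.
Definition antisymmetric_rel (R : rel X) : Prop :=
  forall x y, R x y -> R y x -> x = y.

Definition weak_order (R : rel X) : Prop := complete_rel R /\ transitive_rel R.
Definition linear_order (L : rel X) : Prop :=
  weak_order L /\ antisymmetric_rel L.

Definition maxR (A : {set X}) (R : rel X) : {set X} :=
  [set x in A | [forall y in A, R x y]].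

Definition is_minL (S : {set X}) (L : rel X) (x : X) : Prop :=
  x \in S /\ forall y, y \in S -> L y x.

Definition mc_rep (c : {set X} -> {set X}) (R L : rel X) : Prop :=
  forall A, menu A ->
    (#|maxR A R| = 1 -> c A = maxR A R) /\
    (#|maxR A R| <> 1 ->
       exists x, is_minL (maxR A R) L x /\ c A = maxR A R :\ x).

Definition admits_mcr (c : {set X} -> {set X}) : Prop :=
  exists R L, weak_order R /\ linear_order L /\ mc_rep c R L.

(* r^c(A), with the convention r^c({x}) = {x} (removing the only element
   of a singleton counts as changing the choice). *)
Definition rc (c : {set X} -> {set X}) (A : {set X}) : {set X} :=
  [set x in A | (A :\ x == set0) || (c (A :\ x) != c A)].

Definition cond1 (c : {set X} -> {set X}) : Prop := forall (x y : X) (A B : {set X}),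
  menu A -> A \subset B -> x \in A -> y \in A -> x \in c A -> y \in c B -> x \in c B.
Definition cond2 (c : {set X} -> {set X}) : Prop := forall (x y : X) (A B : {set X}),
  menu A -> A \subset B -> x \in A -> y \in A ->
  x \in rc c A -> y \in rc c B -> x \in rc c B.
Definition cond3 (c : {set X} -> {set X}) : Prop := forall A : {set X},
  2 <= #|A| -> exists2 x, x \in A & x \notin c A.
Definition cond4 (c : {set X} -> {set X}) : Prop := forall (A : {set X}) (x y : X),
  menu A -> x \in A :\: c A -> x \in c (y |: A) -> y \notin c (y |: A).
Definition cond5 (c : {set X} -> {set X}) : Prop := forall A B : {set X},
  menu A -> B \subset rc c A -> 2 <= #|B| ->
  exists x, [/\ x \in B, x \notin c B & B = c B :|: [set x]].

End Defs.

(* Necessity: under transitivity of R, max(B,R) contains max(A,R) for A included in B as soon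
   as they share an element; c(A) is max(A,R), minus its L-least element when that set is not a
   singleton; and r^c(A) = max(A,R), except that r^c(A) = c(A) when max(A,R) has two elements.
   Sufficiency: take x L y iff x is in c{x,y}.  Call S tied when r^c(S) = S and |S| >= 2.
   Condition 5 makes tied sets stable under subsets of size at least 3, under unions with a
   common point and under insertion of an L-intermediate alternative.  Let x R y iff x L y or
   x and y lie in a common tied set; these stability properties make R transitive.  For every
   menu, r^c(A) is c(A) plus at most one alternative, L-below all of c(A); max(A,R) is r^c(A)
   when |c(A)| > 1, and c(A) plus at most one such alternative otherwise. *)

From mathcomp Require Import all_boot zify.
Set Implicit Arguments. Unset Strict Implicit. Unset Printing Implicit Defensive.

Lemma mem_neq0 (T : finType) (A : {set T}) x : x \in A -> A != set0.
Proof. by move=> xA; apply/set0Pn; exists x. Qed.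

Lemma card_gt1_exists_neq (T : finType) (A : {set T}) x :
  1 < #|A| -> exists2 v, v \in A & v != x.
Proof.
case/card_gt1P => a [b [aA bA ab]].
by case: (eqVneq a x) => [ax|]; [exists b => //; rewrite -ax eq_sym | exists a].
Qed.

Section Maxima.
Variables (X : finType) (R : rel X).

Lemma maxRP (A : {set X}) x :
  reflect (x \in A /\ forall y, y \in A -> R x y) (x \in maxR A R).
Proof.
rewrite inE; apply: (iffP andP) => [[xA /forallP xR]|[xA xR]]; split => //.
  by move=> y; apply/implyP.
by apply/forallP => y; apply/implyP/xR.
Qed.

Lemma maxR_subset (A : {set X}) : maxR A R \subset A.
Proof. by apply/subsetP => x /maxRP[]. Qed.

Lemma maxR_restrict (A B : {set X}) x :
  A \subset B -> x \in A -> x \in maxR B R -> x \in maxR A R.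
Proof.
move=> sAB xA /maxRP[_ xR]; apply/maxRP; split=> // y yA.
exact/xR/(subsetP sAB).
Qed.

Hypothesis R_trans : transitive_rel R.

Lemma maxR_subset_maxR (A B : {set X}) z :
  A \subset B -> z \in maxR A R -> z \in maxR B R -> maxR A R \subset maxR B R.
Proof.
move=> sAB /maxRP[zA _] /maxRP[_ zR]; apply/subsetP => x /maxRP[xA xR].
apply/maxRP; split; first exact: (subsetP sAB).
by move=> y yB; apply: R_trans (xR z zA) (zR y yB).
Qed.

Lemma maxR_setD1 (A : {set X}) v x :
  v \in maxR A R -> v != x -> maxR (A :\ x) R = maxR A R :\ x.
Proof.
move=> /maxRP[vA vR] vx; apply/setP => u; rewrite in_setD1.
case: (eqVneq u x) => [->|ux] /=.
  by apply/negbTE/negP => /(subsetP (maxR_subset _))/[!inE]/[!eqxx].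
apply/maxRP/maxRP => -[uA uR]; split.
- by case/setD1P: uA.
- move=> y yA; case: (eqVneq y x) => [_|yx]; last exact/uR/setD1P.
  by apply: R_trans (uR v _) (vR y yA); apply/setD1P.
- exact/setD1P.
- by move=> y /setD1P[_]; apply: uR.
Qed.

End Maxima.

Section ChoiceCorrespondence.
Variables (X : finType) (c : {set X} -> {set X}).
Hypothesis c_corr : choice_corr c.

Lemma choice_neq0 (A : {set X}) : A != set0 -> exists a, a \in c A.
Proof. by move=> A0; apply/set0Pn; case: (c_corr A0). Qed.

Lemma choice_subset (A : {set X}) : A != set0 -> c A \subset A.
Proof. by move=> A0; case: (c_corr A0). Qed.

Lemma mem_choice (A : {set X}) a : A != set0 -> a \in c A -> a \in A.
Proof. by move=> /choice_subset/subsetP; apply. Qed.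

Lemma rc_subset (A : {set X}) : rc c A \subset A.
Proof. by apply/subsetP => x /[!inE] /andP[]. Qed.

Lemma choice_sub_rc (A : {set X}) x : A != set0 -> x \in c A -> x \in rc c A.
Proof.
move=> A0 xc; rewrite inE (mem_choice A0 xc) /=.
case: eqP => [//|/eqP Ax0] /=; apply/eqP => cAx.
have xcAx : x \in c (A :\ x) by rewrite cAx.
by have /[!inE]/[!eqxx] := mem_choice Ax0 xcAx.
Qed.


Definition mc_at (R L : rel X) (A : {set X}) :=
  (#|maxR A R| = 1 -> c A = maxR A R) /\
  (#|maxR A R| <> 1 -> exists x, is_minL (maxR A R) L x /\ c A = maxR A R :\ x).

Lemma mc_at_eq (R L : rel X) (A : {set X}) :
  #|c A| = 1 -> maxR A R = c A -> mc_at R L A.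
Proof. by move=> cA1 MA; rewrite /mc_at MA cA1. Qed.

Lemma mc_at_setU1 (R L : rel X) (A : {set X}) w :
  reflexive L -> c A != set0 -> w \notin c A -> (forall y, y \in c A -> L y w) ->
  maxR A R = w |: c A -> mc_at R L A.
Proof.
move=> L_refl cA0 wNc yLw MA; rewrite /mc_at MA; split.
  by rewrite cardsU1 wNc add1n => -[/eqP]; rewrite cards_eq0 (negbTE cA0).
move=> _; exists w; split; last by rewrite setU1K.
by split=> [|y /setU1P[->|/yLw]]; rewrite ?setU11.
Qed.

Section Necessity.
Variables R L : rel X.
Hypotheses (R_trans : transitive_rel R) (L_anti : antisymmetric_rel L).
Hypothesis c_mc : mc_rep c R L.

Local Notation M A := (maxR A R).

Lemma mc_repP (A : {set X}) : A != set0 ->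
  (#|M A| = 1 /\ c A = M A) \/
  (#|M A| <> 1 /\ exists2 m, is_minL (M A) L m & c A = M A :\ m).
Proof.
move=> A0; have [mc1 mc2] := c_mc A0.
case: (eqVneq #|M A| 1) => [M1|/eqP M1]; first by left; split=> //; apply: mc1.
by right; split=> //; have [m []] := mc2 M1; exists m.
Qed.

Lemma choice_maxR (A : {set X}) x : A != set0 -> x \in c A -> x \in M A.
Proof. by move=> /mc_repP[[_ ->] //|[_ [m _ ->]] /setD1P[]]. Qed.

Lemma maxR_neq0 (A : {set X}) : A != set0 -> M A != set0.
Proof. by move=> A0; have [a /(choice_maxR A0)/mem_neq0] := choice_neq0 A0. Qed.

Lemma is_minL_uniq (S : {set X}) x y : is_minL S L x -> is_minL S L y -> x = y.
Proof. by move=> [xS xL] [yS yL]; apply: L_anti; [apply: yL | apply: xL]. Qed.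

Lemma choice_eq_maxR (A B : {set X}) : A != set0 -> B != set0 -> M A = M B -> c A = c B.
Proof.
move=> /mc_repP[[A1 ->]|[A1 [m mA ->]]] /mc_repP[[B1 ->]|[B1 [m' mB ->]]] MAB //.
- by rewrite MAB in A1.
- by rewrite MAB in A1.
- by rewrite MAB in mA *; rewrite (is_minL_uniq mA mB).
Qed.

Lemma rc_maxR (A : {set X}) x : x \in rc c A -> x \in M A.
Proof.
move=> xr; apply/negPn/negP => xNM; move: xr; rewrite inE => /andP[xA]; apply/negP.
have [v vM] := set0Pn _ (maxR_neq0 (mem_neq0 xA)).
have vx : v != x by apply: contraNneq xNM => <-.
have vAx : v \in A :\ x by rewrite in_setD1 vx (subsetP (maxR_subset _ _) _ vM).
rewrite negb_or (mem_neq0 vAx) negbK.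
apply/eqP/choice_eq_maxR; [exact: mem_neq0 vAx | exact: mem_neq0 xA |].
rewrite (maxR_setD1 R_trans vM vx); apply/setP => z.
by rewrite in_setD1; case: eqVneq => // ->; rewrite (negbTE xNM).
Qed.

Lemma maxR_notin_choice (A : {set X}) x : x \in M A -> x \notin c A ->
  [/\ #|M A| <> 1, is_minL (M A) L x & c A = M A :\ x].
Proof.
move=> xM xNc; have A0 := mem_neq0 (subsetP (maxR_subset _ _) _ xM).
case: (mc_repP A0) => [[_ cA]|[M1 [m m_min cA]]]; first by rewrite cA xM in xNc.
have xm : x = m by move: xNc; rewrite cA in_setD1 xM andbT negbK => /eqP.
by rewrite xm.
Qed.

Lemma maxR_setD1_gt1 (A : {set X}) x :
  1 < #|M A| -> A :\ x != set0 /\ M (A :\ x) = M A :\ x.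
Proof.
move=> M2; have [v vM vx] := card_gt1_exists_neq x M2.
split; last exact: (maxR_setD1 R_trans vM vx).
by apply: (mem_neq0 (x := v)); rewrite in_setD1 vx (subsetP (maxR_subset _ _) _ vM).
Qed.

Lemma maxR_sub_rc (A : {set X}) x : #|M A| != 2 -> x \in M A -> x \in rc c A.
Proof.
move=> M2 xM; have xA := subsetP (maxR_subset _ _) _ xM.
have [xc|xNc] := boolP (x \in c A); first exact: choice_sub_rc (mem_neq0 xA) xc.
have [M1 _ cA] := maxR_notin_choice xM xNc.
have M3 : 2 < #|M A| by move: (card_gt0 (M A)) M1 M2; rewrite (mem_neq0 xM); lia.
have [Ax0 MAx] := maxR_setD1_gt1 x (ltnW M3).
rewrite inE xA (negbTE Ax0) /=.
case: (mc_repP Ax0) => [[Mx1 _]|[_ [m [mM _] cAx]]].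
  by move: Mx1 M3; rewrite MAx (cardsD1 x (M A)) xM; lia.
apply/negP => /eqP cAxA; have : m \in c (A :\ x) by rewrite cAxA cA -MAx.
by rewrite cAx in_setD1 eqxx.
Qed.

Lemma rc_sub_choice (A : {set X}) x : #|M A| = 2 -> x \in rc c A -> x \in c A.
Proof.
move=> M2 xr; have xA := subsetP (rc_subset A) _ xr; have xM := rc_maxR xr.
apply/negPn/negP => xNc; have [_ _ cA] := maxR_notin_choice xM xNc.
have M_gt1 : 1 < #|M A| by rewrite M2.
have [Ax0 MAx] := maxR_setD1_gt1 x M_gt1.
move: xr; rewrite inE xA (negbTE Ax0) /= => /negP; apply.
case: (mc_repP Ax0) => [[_ ->]|[Mx1 _]]; first by rewrite MAx -cA.
by move: Mx1 (cardsD1 x (M A)); rewrite MAx xM M2; lia.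
Qed.

Lemma mc_cond1 : cond1 c.
Proof.
move=> x y A B A0 sAB xA yA xc yc; have B0 := mem_neq0 (subsetP sAB _ xA).
have yMB := choice_maxR B0 yc; have yMA := maxR_restrict sAB yA yMB.
have sM := maxR_subset_maxR R_trans sAB yMA yMB.
have xMA := choice_maxR A0 xc; have xMB := subsetP sM _ xMA.
case: (mc_repP B0) => [[_ ->] //|[_ [m [_ mL] cB]]].
rewrite cB in_setD1 xMB andbT; apply/eqP => xm; subst m.
have yx : y != x by move: yc; rewrite cB => /setD1P[].
case: (mc_repP A0) => [[MA1 _]|[_ [m [mM m_min] cA]]].
  suff : 1 < #|M A| by rewrite MA1.
  by apply/card_gt1P; exists y, x.
have xm : x != m by move: xc; rewrite cA => /setD1P[].
by rewrite (L_anti (mL m (subsetP sM _ mM)) (m_min x xMA)) eqxx in xm.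
Qed.

Lemma mc_cond3 : cond3 c.
Proof.
move=> A A2; have A0 : A != set0 by rewrite -card_gt0 ltnW.
case: (mc_repP A0) => [[/eqP/cards1P[m Mm] cA]|[_ [m [mM _] cA]]].
  have [x xA xm] := card_gt1_exists_neq m A2.
  by exists x; rewrite // cA Mm inE.
exists m; first exact: (subsetP (maxR_subset _ _) _ mM).
by rewrite cA in_setD1 eqxx.
Qed.

Lemma mc_cond4 : cond4 c.
Proof.
move=> A x y A0 /setDP[xA xNc] xcB; apply/negP => ycB.
set B := y |: A in xcB ycB; have sAB : A \subset B := subsetU1 y A.
have B0 := mem_neq0 (subsetP sAB _ xA).
have yNA : y \notin A.
  by apply: contraNN xNc => yA; have <- : B = A by apply/setUidPr; rewrite sub1set.
have xMB := choice_maxR B0 xcB; have yMB := choice_maxR B0 ycB.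
have xMA := maxR_restrict sAB xA xMB.
have [_ [_ x_min] _] := maxR_notin_choice xMA xNc.
case: (mc_repP B0) => [[MB1 _]|[_ [m [mM mL] cB]]].
  have xy : x != y by apply: contraNneq yNA => <-.
  suff : 1 < #|M B| by rewrite MB1.
  by apply/card_gt1P; exists x, y.
have xm : x != m by move: xcB; rewrite cB => /setD1P[].
have ym : y != m by move: ycB; rewrite cB => /setD1P[].
have mA : m \in A.
  by move: (subsetP (maxR_subset _ _) _ mM); rewrite /B in_setU1 eq_sym (negbTE ym).
have mMA := maxR_restrict sAB mA mM.
by rewrite (L_anti (x_min m mMA) (mL x xMB)) eqxx in xm.
Qed.

Lemma mc_cond5 : cond5 c.
Proof.
move=> A B A0 sBr B2; have B0 : B != set0 by rewrite -card_gt0 ltnW.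
have sBM : B \subset M A by apply/subsetP => x /(subsetP sBr)/rc_maxR.
have MB : M B = B.
  apply/eqP; rewrite eqEsubset maxR_subset; apply/subsetP => x xB.
  apply/maxRP; split=> // y yB.
  by case/maxRP: (subsetP sBM _ xB) => _; apply; case/maxRP: (subsetP sBM _ yB).
case: (mc_repP B0) => [[MB1 _]|[_ [m [mM _] cB]]]; first by rewrite -MB MB1 in B2.
rewrite MB in mM cB; exists m; split=> //; first by rewrite cB in_setD1 eqxx.
by rewrite cB setUC setD1K.
Qed.

Lemma mc_cond2 : cond2 c.
Proof.
move=> x y A B A0 sAB xA yA xr yr; have B0 := mem_neq0 (subsetP sAB _ xA).
have yMB := rc_maxR yr; have yMA := maxR_restrict sAB yA yMB.
have sM := maxR_subset_maxR R_trans sAB yMA yMB.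
have xMA := rc_maxR xr; have xMB := subsetP sM _ xMA.
have [MB2|] := eqVneq #|M B| 2; last by move/maxR_sub_rc; apply.
have [-> //|xy] := eqVneq x y.
have MAB : M A = M B by apply/eqP; rewrite eqEcard sM MB2; apply/card_gt1P; exists x, y.
apply: (choice_sub_rc B0); rewrite -(choice_eq_maxR A0 B0 MAB).
by apply: rc_sub_choice xr; rewrite MAB.
Qed.

Lemma mc_conds : [/\ cond1 c, cond2 c, cond3 c, cond4 c & cond5 c].
Proof.
split; [exact: mc_cond1 | exact: mc_cond2 | exact: mc_cond3 | exact: mc_cond4 |].
exact: mc_cond5.
Qed.

End Necessity.

Section Sufficiency.
Hypotheses (c_cond1 : cond1 c) (c_cond2 : cond2 c).
Hypotheses (c_cond3 : cond3 c) (c_cond5 : cond5 c).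

Definition Lc (x y : X) := x \in c [set x; y].

Lemma pair_neq0 (x y : X) : [set x; y] != set0.
Proof. exact: mem_neq0 (set21 x y). Qed.

Lemma pair_subset (A : {set X}) x y : x \in A -> y \in A -> [set x; y] \subset A.
Proof. by move=> xA yA; rewrite subUset !sub1set xA yA. Qed.

Lemma Lc_refl : reflexive Lc.
Proof.
move=> x; have [a ac] := choice_neq0 (pair_neq0 x x).
by case/set2P: (mem_choice (pair_neq0 x x) ac) => ax; rewrite ax in ac.
Qed.

Lemma Lc_total (x y : X) : Lc x y \/ Lc y x.
Proof.
have [a ac] := choice_neq0 (pair_neq0 x y).
case/set2P: (mem_choice (pair_neq0 x y) ac) => ax; rewrite ax in ac.
  by left.
by right; rewrite /Lc setUC.
Qed.

Lemma Lc_antisym (x y : X) : Lc x y -> Lc y x -> x = y.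
Proof.
rewrite /Lc => xc yc; apply/eqP/negPn/negP => xy.
have xy2 : 1 < #|[set x; y]| by rewrite cards2 xy.
have [w /set2P[]-> wNc] := c_cond3 xy2.
  by rewrite xc in wNc.
by rewrite setUC yc in wNc.
Qed.

Lemma mem_choice_Lc (A : {set X}) a b :
  A != set0 -> a \in c A -> b \in A -> Lc b a -> b \in c A.
Proof.
move=> A0 ac bA ba; apply: (c_cond1 (y := a) (pair_neq0 b a)) => //.
- by rewrite pair_subset ?(mem_choice A0 ac).
- exact: set21.
- exact: set22.
Qed.

Lemma mem_rc_Lc (A : {set X}) a b :
  A != set0 -> a \in rc c A -> b \in A -> Lc b a -> b \in rc c A.
Proof.
move=> A0 ar bA ba; apply: (c_cond2 (y := a) (pair_neq0 b a)) => //.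
- by rewrite pair_subset ?(subsetP (rc_subset A) _ ar).
- exact: set21.
- exact: set22.
- exact: choice_sub_rc (pair_neq0 b a) ba.
Qed.

Lemma Lc_choice (A : {set X}) a b :
  A != set0 -> a \in c A -> b \in A -> b \notin c A -> Lc a b.
Proof.
move=> A0 ac bA; case: (Lc_total a b) => // ba.
by rewrite (mem_choice_Lc A0 ac bA ba).
Qed.

Lemma Lc_rc (A : {set X}) a b :
  A != set0 -> a \in rc c A -> b \in A -> b \notin rc c A -> Lc a b.
Proof.
move=> A0 ar bA; case: (Lc_total a b) => // ba.
by rewrite (mem_rc_Lc A0 ar bA ba).
Qed.

Lemma Lc_trans : transitive_rel Lc.
Proof.
move=> x y z xy yz; case: (Lc_total x z) => // zx.
have [<-|xz] := eqVneq x z; first exact: Lc_refl.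
pose T := [set x; y; z].
have xT : x \in T by rewrite !inE eqxx.
have yT : y \in T by rewrite !inE eqxx orbT.
have zT : z \in T by rewrite !inE eqxx !orbT.
have T0 := mem_neq0 xT.
(* the cycle x L y L z L x spreads any chosen element over the whole of T *)
have [xz_c zy_c yx_c] : [/\ x \in c T -> z \in c T, z \in c T -> y \in c T
                          & y \in c T -> x \in c T].
  by split=> uc; apply: (mem_choice_Lc T0 uc).
have xc : x \in c T.
  have [t tc] := choice_neq0 T0.
  move: (mem_choice T0 tc); rewrite /T !inE => /orP[/orP[]|] /eqP tE; rewrite tE in tc.
  - exact: tc.
  - exact: yx_c.
  - exact/yx_c/zy_c.
have T2 : 1 < #|T| by apply/card_gt1P; exists x, z.
have [w wT wNc] := c_cond3 T2.
suff : w \in c T by rewrite (negbTE wNc).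
move: wT; rewrite /T !inE => /orP[/orP[]|] /eqP->.
- exact: xc.
- exact/zy_c/xz_c.
- exact/xz_c.
Qed.

Lemma choice_subset_choice (A B : {set X}) a :
  A \subset B -> a \in A -> a \in c B -> c A \subset c B.
Proof.
move=> sAB aA ac; apply/subsetP => x xc; have A0 := mem_neq0 aA.
exact: c_cond1 A0 sAB (mem_choice A0 xc) aA xc ac.
Qed.

Lemma rc_subset_rc (A B : {set X}) a :
  A \subset B -> a \in A -> a \in rc c B -> rc c A \subset rc c B.
Proof.
move=> sAB aA ar; apply/subsetP => x xr.
exact: c_cond2 (mem_neq0 aA) sAB (subsetP (rc_subset A) _ xr) aA xr ar.
Qed.

Lemma rc_choice1 (A : {set X}) a : A != set0 -> c A = [set a] -> rc c A = c A.
Proof.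
move=> A0 cA; have ac : a \in c A by rewrite cA set11.
apply/eqP; rewrite eqEsubset andbC; apply/andP; split.
  by apply/subsetP => x; apply: choice_sub_rc.
apply/subsetP => x xr; apply/negPn/negP => xNc.
have aAx : a \in A :\ x.
  by rewrite in_setD1 (mem_choice A0 ac) andbT; apply: contraNneq xNc => <-.
have sc := choice_subset_choice (subD1set A x) aAx ac.
suff cAx : c (A :\ x) = c A.
  by move: xr; rewrite inE (negbTE (mem_neq0 aAx)) cAx eqxx andbF.
apply/eqP; rewrite eqEsubset sc cA sub1set /=.
have [u uc] := choice_neq0 (mem_neq0 aAx).
have /set1P ua : u \in [set a] by rewrite -cA (subsetP sc).
by rewrite -ua.
Qed.

Lemma rc_notin_choice (A : {set X}) : A != set0 -> 1 < #|c A| ->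
  exists2 w, w \in rc c A & w \notin c A.
Proof.
have [n] := ubnP #|A|; elim: n A => // n IH A An A0 cA2.
have A2 : 1 < #|A| := leq_trans cA2 (subset_leq_card (choice_subset A0)).
have [v vA vNc] := c_cond3 A2.
have [vr|] := boolP (v \in rc c A); first by exists v.
rewrite inE vA negb_or negbK => /andP[Av0 /eqP cAv].
have [a ac] := choice_neq0 A0.
have aAv : a \in A :\ v.
  by rewrite in_setD1 (mem_choice A0 ac) andbT; apply: contraNneq vNc => <-.
have Avn : #|A :\ v| < n by move: An; rewrite (cardsD1 v) vA.
have cAv2 : 1 < #|c (A :\ v)| by rewrite cAv.
have [w wr wNc] := IH _ Avn Av0 cAv2.
exists w; last by rewrite -cAv.
exact: c_cond2 Av0 (subD1set A v) (subsetP (rc_subset _) _ wr) aAv wr (choice_sub_rc A0 ac).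
Qed.

Lemma rc_notin_choice_uniq (A : {set X}) w1 w2 : A != set0 ->
  w1 \in rc c A -> w1 \notin c A -> w2 \in rc c A -> w2 \notin c A -> w1 = w2.
Proof.
move=> A0 w1r w1Nc w2r w2Nc; apply/eqP/negPn/negP => w12.
have [a ac] := choice_neq0 A0.
pose B := [set w1; w2] :|: c A.
have sBr : B \subset rc c A.
  by rewrite subUset pair_subset //=; apply/subsetP => x; apply: choice_sub_rc.
have sBA := subset_trans sBr (rc_subset A).
have w1B : w1 \in B by rewrite !inE eqxx.
have w2B : w2 \in B by rewrite !inE eqxx orbT.
have aB : a \in B by rewrite inE ac orbT.
have B2 : 1 < #|B| by apply/card_gt1P; exists w1, w2.
have [v [vB vNc BE]] := c_cond5 A0 sBr B2.
(* by condition 1, alternatives not chosen from A are not chosen from B either *)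
have notin_choice_eq w : w \in B -> w \notin c A -> w = v.
  move=> wB wNc; move: (wB); rewrite {1}BE inE => /orP[wc|/set1P //].
  by rewrite (c_cond1 (mem_neq0 wB) sBA wB aB wc ac) in wNc.
by rewrite (notin_choice_eq _ w1B w1Nc) (notin_choice_eq _ w2B w2Nc) eqxx in w12.
Qed.

Lemma rc_choice_gt1 (A : {set X}) : A != set0 -> 1 < #|c A| ->
  exists2 w, w \notin c A & rc c A = w |: c A.
Proof.
move=> A0 cA2; have [w wr wNc] := rc_notin_choice A0 cA2.
exists w => //; apply/eqP; rewrite eqEsubset; apply/andP; split; apply/subsetP => x.
  move=> xr; rewrite in_setU1; have [//|xNc] := boolP (x \in c A); first by rewrite orbT.
  by rewrite (rc_notin_choice_uniq A0 xr xNc wr wNc) eqxx.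
by case/setU1P => [->|]; last exact: choice_sub_rc.
Qed.

Definition tied (S : {set X}) := (rc c S == S) && (1 < #|S|).

Lemma rc_id_setU1 (B : {set X}) v :
  v \notin c B -> B = c B :|: [set v] -> 1 < #|c B| -> rc c B = B.
Proof.
move=> vNc BE cB2; have vB : v \in B by rewrite BE inE set11 orbT.
have B0 := mem_neq0 vB.
apply/eqP; rewrite eqEsubset rc_subset; apply/subsetP => x xB.
have [xc|xNc] := boolP (x \in c B); first exact: choice_sub_rc.
have -> : x = v by move: xB; rewrite {1}BE inE (negbTE xNc) => /set1P.
rewrite inE vB /=; apply/orP; right.
have -> : B :\ v = c B by rewrite {1}BE setUC setU1K.
have [u uc uNcc] := c_cond3 cB2.
by apply: contraNneq uNcc => ->.
Qed.

Lemma tied_sub_rc (A B : {set X}) : A != set0 -> B \subset rc c A -> 2 < #|B| -> tied B.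
Proof.
move=> A0 sBr B3; have [v [vB vNc BE]] := c_cond5 A0 sBr (ltnW B3).
have cB2 : 1 < #|c B| by move: B3; rewrite {1}BE setUC cardsU1 vNc add1n ltnS.
by rewrite /tied (rc_id_setU1 vNc BE cB2) eqxx ltnW.
Qed.

Lemma tied_subset (S B : {set X}) : tied S -> B \subset S -> 2 < #|B| -> tied B.
Proof.
case/andP=> /eqP rcS S2 sBS; have S0 : S != set0 by rewrite -card_gt0 ltnW.
by apply: tied_sub_rc S0 _; rewrite rcS.
Qed.

Lemma rc_tied (A : {set X}) : A != set0 -> 1 < #|c A| -> tied (rc c A).
Proof.
move=> A0 cA2; apply: (tied_sub_rc A0 (subxx _)).
by have [w wNc ->] := rc_choice_gt1 A0 cA2; rewrite cardsU1 wNc.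
Qed.

Lemma tied_subset_rc (S A : {set X}) a :
  tied S -> S \subset A -> a \in S -> a \in rc c A -> S \subset rc c A.
Proof. by case/andP=> /eqP rcS _ sSA aS ar; rewrite -{1}rcS; apply: rc_subset_rc ar. Qed.

Lemma tied_setU1 (S : {set X}) y s1 s2 :
  tied S -> s1 \in S -> s2 \in S -> Lc s1 y -> Lc y s2 -> tied (y |: S).
Proof.
move=> tS s1S s2S s1y ys2; set T := y |: S.
have sST : S \subset T := subsetU1 y S.
have T0 : T != set0 := mem_neq0 (setU11 y S).
have [s sS sc] : exists2 s, s \in S & s \in c T.
  have [t tc] := choice_neq0 T0.
  case/setU1P: (mem_choice T0 tc) => [ty|t_S]; last by exists t.
  exists s1 => //; rewrite ty in tc.
  exact: mem_choice_Lc T0 tc (subsetP sST _ s1S) s1y.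
have sSr := tied_subset_rc tS sST sS (choice_sub_rc T0 sc).
have yr : y \in rc c T := mem_rc_Lc T0 (subsetP sSr _ s2S) (setU11 y S) ys2.
rewrite /tied eqEsubset rc_subset subUset sub1set yr sSr /=.
by apply: leq_trans (subset_leq_card sST); case/andP: tS.
Qed.

Lemma tied_setU (S1 S2 : {set X}) z :
  tied S1 -> tied S2 -> z \in S1 -> z \in S2 -> tied (S1 :|: S2).
Proof.
have tied_setU_choice S S' t : tied S -> tied S' -> z \in S -> z \in S' ->
    t \in S -> t \in c (S :|: S') -> tied (S :|: S').
  move=> tS tS' zS zS' t_S tc.
  have U0 : S :|: S' != set0 by apply: (mem_neq0 (x := t)); rewrite inE t_S.
  have sSr := tied_subset_rc tS (subsetUl S S') t_S (choice_sub_rc U0 tc).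
  have sS'r := tied_subset_rc tS' (subsetUr S S') zS' (subsetP sSr _ zS).
  rewrite /tied eqEsubset rc_subset subUset sSr sS'r /=.
  by apply: leq_trans (subset_leq_card (subsetUl S S')); case/andP: tS.
move=> tS1 tS2 zS1 zS2.
have U0 : S1 :|: S2 != set0 by apply: (mem_neq0 (x := z)); rewrite inE zS1.
have [t tc] := choice_neq0 U0.
case/setUP: (mem_choice U0 tc) => tS; first exact: tied_setU_choice tc.
by rewrite setUC in tc *; apply: tied_setU_choice tc.
Qed.

Definition cotied (x y : X) := [exists S : {set X}, [&& x \in S, y \in S & tied S]].

Lemma cotiedP (x y : X) :
  reflect (exists S : {set X}, [/\ x \in S, y \in S & tied S]) (cotied x y).
Proof.
apply: (iffP existsP) => -[S] => [/and3P|] [xS yS tS]; exists S.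
  by split.
by rewrite xS yS tS.
Qed.

Definition Rc (x y : X) := Lc x y || cotied x y.

Lemma Rc_total (x y : X) : Rc x y \/ Rc y x.
Proof. by case: (Lc_total x y) => xy; [left | right]; rewrite /Rc xy. Qed.

Lemma Rc_trans : transitive_rel Rc.
Proof.
move=> x y z /orP[xy|/cotiedP[S [xS yS tS]]] /orP[yz|/cotiedP[S' [yS' zS' tS']]].
- by rewrite /Rc (Lc_trans xy yz).
- case: (Lc_total x z) => [xz|zx]; first by rewrite /Rc xz.
  apply/orP; right; apply/cotiedP; exists (x |: S'); split.
  + exact: setU11.
  + exact: setU1r.
  + exact: tied_setU1 tS' zS' yS' zx xy.
- case: (Lc_total x z) => [xz|zx]; first by rewrite /Rc xz.
  apply/orP; right; apply/cotiedP; exists (z |: S); split.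
  + exact: setU1r.
  + exact: setU11.
  + exact: tied_setU1 tS yS xS yz zx.
- apply/orP; right; apply/cotiedP; exists (S :|: S'); split.
  + by rewrite inE xS.
  + by rewrite inE zS' orbT.
  + exact: tied_setU tS tS' yS yS'.
Qed.

Lemma cotied_mem_rc (A : {set X}) a x y :
  a \in rc c A -> x \in A -> y \in A -> cotied x a -> cotied y a ->
  x != a -> y != a -> x != y -> x \in rc c A.
Proof.
move=> ar xA yA /cotiedP[S1 [xS1 aS1 tS1]] /cotiedP[S2 [yS2 aS2 tS2]] xa ya xy.
have aA := subsetP (rc_subset A) _ ar.
pose T := x |: [set a; y].
have sTU : T \subset S1 :|: S2 by rewrite !subUset !sub1set !inE xS1 aS1 yS2 orbT.
have sTA : T \subset A by rewrite !subUset !sub1set xA aA yA.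
have T3 : 2 < #|T| by rewrite cardsU1 cards2 !inE negb_or xa xy eq_sym ya.
have aT : a \in T by rewrite !inE eqxx orbT.
have := tied_subset_rc (tied_subset (tied_setU tS1 tS2 aS1 aS2) sTU T3) sTA aT ar.
by move/subsetP; apply; rewrite setU11.
Qed.

Lemma maxR_Rc_gt1 (A : {set X}) : A != set0 -> 1 < #|c A| -> maxR A Rc = rc c A.
Proof.
move=> A0 cA2; have [a ac] := choice_neq0 A0.
have aA := mem_choice A0 ac; have ar := choice_sub_rc A0 ac.
apply/eqP; rewrite eqEsubset; apply/andP; split; apply/subsetP => x; last first.
  move=> xr; apply/maxRP; split=> [|y yA]; first exact: (subsetP (rc_subset A)).
  have [yr|yNr] := boolP (y \in rc c A); last by rewrite /Rc (Lc_rc A0 xr yA yNr).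
  by apply/orP; right; apply/cotiedP; exists (rc c A); split=> //; apply: rc_tied.
case/maxRP=> xA /(_ a aA) /orP[xLa|xa_cotied].
  exact/choice_sub_rc/(mem_choice_Lc A0 ac xA xLa).
have [xc|xNc] := boolP (x \in c A); first exact: choice_sub_rc.
have [b bc ba] := card_gt1_exists_neq a cA2.
have ba_cotied : cotied b a.
  by apply/cotiedP; exists (rc c A); split; rewrite ?rc_tied ?choice_sub_rc.
have xa : x != a by apply: contraNneq xNc => ->.
have xb : x != b by apply: contraNneq xNc => ->.
exact: cotied_mem_rc ar xA (mem_choice A0 bc) xa_cotied ba_cotied xa ba xb.
Qed.

Lemma maxR_Rc_choice1 (A : {set X}) a : A != set0 -> c A = [set a] ->
  maxR A Rc = c A \/ exists2 x, x \notin c A & maxR A Rc = x |: c A.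
Proof.
move=> A0 cA; have ac : a \in c A by rewrite cA set11.
have aA := mem_choice A0 ac; have ar := choice_sub_rc A0 ac.
have aM : a \in maxR A Rc.
  apply/maxRP; split=> // y yA; apply/orP; left.
  have [|yNc] := boolP (y \in c A); last exact: Lc_choice A0 ac yA yNc.
  by rewrite cA => /set1P->; apply: Lc_refl.
have cotied_a z : z \in maxR A Rc -> z != a -> cotied z a.
  case/maxRP=> zA /(_ a aA) /orP[za|//]; have := mem_choice_Lc A0 ac zA za.
  by rewrite cA => /set1P->; rewrite eqxx.
(* two such alternatives would form with a a tied triple inside A, hence lie in r^c(A) = {a} *)
have maxR_uniq z x : z \in maxR A Rc -> x \in maxR A Rc -> z != a -> x != a -> z = x.
  move=> zM xM za xa; apply/eqP/negP => /negP zx; have [zA _] := maxRP _ _ _ zM.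
  have [xA _] := maxRP _ _ _ xM.
  have := cotied_mem_rc ar zA xA (cotied_a z zM za) (cotied_a x xM xa) za xa zx.
  by rewrite (rc_choice1 A0 cA) cA => /set1P za'; rewrite za' eqxx in za.
have [Ma|/set0Pn[x /setD1P[xa xM]]] := eqVneq (maxR A Rc :\ a) set0.
  left; apply/eqP; rewrite eqEsubset cA sub1set aM andbT; apply/subsetP => z zM.
  apply/set1P/eqP/negPn/negP => za.
  suff : z \in maxR A Rc :\ a by rewrite Ma inE.
  by rewrite in_setD1 za.
right; exists x; first by rewrite cA inE.
apply/eqP; rewrite eqEsubset; apply/andP; split; apply/subsetP => z; last first.
  by rewrite cA => /setU1P[->|/set1P->].
move=> zM; rewrite cA in_setU1 in_set1; have [->|za] := eqVneq z a; first by rewrite orbT.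
by rewrite (maxR_uniq z x zM xM za xa) eqxx.
Qed.

Lemma mc_rep_Rc_Lc : mc_rep c Rc Lc.
Proof.
move=> A A0; have [a ac] := choice_neq0 A0; have cA0 := mem_neq0 ac.
have [cA2|cA1] := ltnP 1 #|c A|.
  have [w wNc rcA] := rc_choice_gt1 A0 cA2.
  have wA : w \in A by apply: (subsetP (rc_subset A)); rewrite rcA setU11.
  apply: (mc_at_setU1 Lc_refl cA0 wNc) => [y yc|]; first exact: Lc_choice A0 yc wA wNc.
  by rewrite maxR_Rc_gt1.
have /cards1P[a' cA] : #|c A| == 1 by rewrite eqn_leq cA1 card_gt0 cA0.
case: (maxR_Rc_choice1 A0 cA) => [MA|[x xNc MA]].
  by apply: mc_at_eq MA; rewrite cA cards1.
have xA : x \in A by apply: (subsetP (maxR_subset Rc A)); rewrite MA setU11.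
apply: (mc_at_setU1 Lc_refl cA0 xNc) MA => y yc.
exact: Lc_choice A0 yc xA xNc.
Qed.

Lemma conds_admits_mcr : admits_mcr c.
Proof.
exists Rc, Lc; split; last split; last exact: mc_rep_Rc_Lc.
- by split; [exact: Rc_total | exact: Rc_trans].
- by split; [split; [exact: Lc_total | exact: Lc_trans] | exact: Lc_antisym].
Qed.

End Sufficiency.

End ChoiceCorrespondence.

Theorem theorem1 (X : finType) (c : {set X} -> {set X}) :
  choice_corr c ->
  (admits_mcr c <-> [/\ cond1 c, cond2 c, cond3 c, cond4 c & cond5 c]).
Proof.
move=> c_corr; split.
  by case=> R [L [[_ R_trans] [[_ L_anti] c_mc]]]; apply: mc_conds c_mc.
by case=> c1 c2 c3 _ c5; apply: conds_admits_mcr.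
Qed.
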